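(* Let $k$ be a field of characteristic $\neq 2$, let $\mathcal O$ be the Lie algebra described in the context, and let $\mathcal I$ be a maximal (proper) ideal of $\mathcal O$. Then the quotient $\mathcal O/\mathcal I$ is either a one-dimensional Lie algebra over $k$, or a three-dimensional simple Lie algebra over a finite field extension of $k$.
   Context: $\mathcal O$ is the Lie algebra over $k$ which is a free $k[t]$-module with basis $v_0,v_1,v_2$, with $k[t]$-bilinear bracket determined by $[v_0,v_1]=-v_2(t-1)$, $[v_1,v_2]=-v_0$, $[v_2,v_0]=v_1t$ (it is isomorphic to the Onsager algebra, the Lie algebra over $k$ with generators $A,B$ and relations $[A,[A,[A,B]]]=4[A,B]$, $[B,[B,[B,A]]]=4[B,A]$). *)

From HB Require Import structures.
From mathcomp Require Import all_boot all_order all_algebra all_field.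
Set Implicit Arguments. Unset Strict Implicit. Unset Printing Implicit Defensive.
Import GRing.Theory.
Local Open Scope ring_scope.

(* The Onsager algebra O: the free k[t]-module with basis v0,v1,v2,
   elements represented as row vectors of coordinates (u0,u1,u2). *)
Definition Ons (k : fieldType) := 'rV[{poly k}]_3.

Definition oc (k : fieldType) (u : Ons k) (i : nat) : {poly k} := u 0 (inord i).

(* k[t]-bilinear bracket with [v0,v1] = -v2 (t-1), [v1,v2] = -v0,
   [v2,v0] = v1 t. *)
Definition ons_bracket (k : fieldType) (u w : Ons k) : Ons k :=
  \row_(i < 3)
    nth 0 [:: - (oc u 1 * oc w 2 - oc u 2 * oc w 1);
              (oc u 2 * oc w 0 - oc u 0 * oc w 2) * 'X;
              - ((oc u 0 * oc w 1 - oc u 1 * oc w 0) * ('X - 1))] i.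

Definition ons_scale (k : fieldType) (a : k) (u : Ons k) : Ons k := a%:P *: u.

Definition ons_ideal (k : fieldType) (I : Ons k -> Prop) : Prop :=
  [/\ I 0,
      (forall x y, I x -> I y -> I (x + y)),
      (forall (a : k) x, I x -> I (ons_scale a x)) &
      (forall x y, I y -> I (ons_bracket x y))].

Definition ons_maximal_ideal (k : fieldType) (I : Ons k -> Prop) : Prop :=
  [/\ ons_ideal I,
      (exists x, ~ I x) &
      (forall J, ons_ideal J -> (forall x, I x -> J x) ->
                 (forall x, J x -> I x) \/ (forall x, J x))].

Definition lie_bracket_on (K : fieldType) (V : lmodType K)
  (br : V -> V -> V) : Prop :=
  [/\ (forall (c : K) u v w, br (c *: u + v) w = c *: br u w + br v w),
      (forall (c : K) u v w, br w (c *: u + v) = c *: br w u + br w v),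
      (forall u, br u u = 0) &
      (forall u v w, br u (br v w) + br v (br w u) + br w (br u v) = 0)].

Definition simple_lie (K : fieldType) (V : lmodType K)
  (br : V -> V -> V) : Prop :=
  [/\ lie_bracket_on br,
      (exists u v, br u v != 0) &
      (forall J : V -> Prop,
         J 0 -> (forall u v, J u -> J v -> J (u + v)) ->
         (forall (c : K) u, J u -> J (c *: u)) ->
         (forall u v, J v -> J (br u v)) ->
         (forall u, J u -> u = 0) \/ (forall u, J u))].

(* O/I is a one-dimensional k-vector space: there is a surjective k-linear
   map O -> k with kernel exactly I. *)
Definition quotient_dim1 (k : fieldType) (I : Ons k -> Prop) : Prop :=
  exists f : Ons k -> k,
    [/\ (forall x y, f (x + y) = f x + f y),
        (forall (a : k) x, f (ons_scale a x) = a * f x),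
        (forall c : k, exists x, f x = c) &
        (forall x, f x = 0 <-> I x)].

(* O/I is (as a Lie algebra over k) a three-dimensional simple Lie algebra
   over the finite field extension K of k: there is a surjective k-linear map
   phi : O -> K^3 with kernel I, intertwining the bracket of O with a
   K-Lie bracket br on K^3 that is simple over K. *)
Definition quotient_simple3_over (k : fieldType) (K : fieldExtType k)
  (I : Ons k -> Prop) : Prop :=
  exists (phi : Ons k -> 'rV[K]_3) (br : 'rV[K]_3 -> 'rV[K]_3 -> 'rV[K]_3),
    [/\ (forall x y, phi (x + y) = phi x + phi y),
        (forall (a : k) x, phi (ons_scale a x) = (a%:A : K) *: phi x),
        (forall v, exists x, phi x = v) /\ (forall x, phi x = 0 <-> I x),
        (forall x y, phi (ons_bracket x y) = br (phi x) (phi y)) &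
        simple_lie br].

(* If I contains [O, O], then O/I is the quotient of O/[O, O] = k^2 by a nonzero proper
   subspace ([O, O] itself is not maximal), hence one-dimensional.  Otherwise maximality
   makes I a k[t]-submodule (as [u, p x] = [p u, x]) whose annihilator {p | p O <= I} is a
   nonzero prime ideal of k[t], generated by an irreducible pi.  Modulo t or t - 1 the
   bracket degenerates and I would contain [O, O], so pi is neither.  With K = k[t]/(pi)
   and z the class of t, reduction modulo pi maps O onto K^3 with the twisted cross product
   of structure constants -1, z, 1 - z; these are nonzero, so K^3 is simple over K and the
   image of the proper ideal I is 0, i.e. I = pi O. *)

From mathcomp Require Import all_boot all_order all_algebra all_field.
From mathcomp Require Import ring zify.
From Stdlib Require Import Classical.
Set Implicit Arguments. Unset Strict Implicit. Unset Printing Implicit Defensive.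
Import GRing.Theory.
Local Open Scope ring_scope.

Section Row3.
Variable R : comNzRingType.

Definition row3 (a b c : R) : 'rV[R]_3 := \row_(i < 3) nth 0 [:: a; b; c] i.
Definition coord3 (u : 'rV[R]_3) (i : nat) : R := u 0 (inord i).

Lemma coord3_row3_0 a b c : coord3 (row3 a b c) 0 = a.
Proof. by rewrite /coord3 mxE inordK. Qed.
Lemma coord3_row3_1 a b c : coord3 (row3 a b c) 1 = b.
Proof. by rewrite /coord3 mxE inordK. Qed.
Lemma coord3_row3_2 a b c : coord3 (row3 a b c) 2 = c.
Proof. by rewrite /coord3 mxE inordK. Qed.

Lemma row3_coord3 u : u = row3 (coord3 u 0) (coord3 u 1) (coord3 u 2).
Proof.
apply/rowP => i; rewrite mxE /coord3; case: i => [[|[|[|]]] Hi] //=;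
  by congr (u 0 _); apply/val_inj; rewrite /= inordK.
Qed.

Lemma coord3_inj u w :
  coord3 u 0 = coord3 w 0 -> coord3 u 1 = coord3 w 1 -> coord3 u 2 = coord3 w 2 ->
  u = w.
Proof. by move=> h0 h1 h2; rewrite (row3_coord3 u) (row3_coord3 w) h0 h1 h2. Qed.

Lemma coord3D u w i : coord3 (u + w) i = coord3 u i + coord3 w i.
Proof. by rewrite /coord3 mxE. Qed.
Lemma coord3N u i : coord3 (- u) i = - coord3 u i.
Proof. by rewrite /coord3 mxE. Qed.
Lemma coord3B u w i : coord3 (u - w) i = coord3 u i - coord3 w i.
Proof. by rewrite coord3D coord3N. Qed.
Lemma coord3Z a u i : coord3 (a *: u) i = a * coord3 u i.
Proof. by rewrite /coord3 mxE. Qed.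
Lemma coord30 i : coord3 0 i = 0.
Proof. by rewrite /coord3 mxE. Qed.

Definition coord3E :=
  (coord3D, coord3B, coord3N, coord3Z, coord30,
   coord3_row3_0, coord3_row3_1, coord3_row3_2).

Definition cross3 (d0 d1 d2 : R) (u w : 'rV[R]_3) : 'rV[R]_3 :=
  row3 (d0 * (coord3 u 1 * coord3 w 2 - coord3 u 2 * coord3 w 1))
       (d1 * (coord3 u 2 * coord3 w 0 - coord3 u 0 * coord3 w 2))
       (d2 * (coord3 u 0 * coord3 w 1 - coord3 u 1 * coord3 w 0)).

End Row3.

Lemma coord3_map (R S : comNzRingType) (f : R -> S) (u : 'rV[R]_3) i :
  coord3 (map_mx f u) i = f (coord3 u i).
Proof. by rewrite /coord3 mxE. Qed.

Ltac row3_ring := apply: coord3_inj; rewrite /cross3 ?coord3E; ring.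

Section Cross3.
Variables (R : comNzRingType) (d0 d1 d2 : R).
Local Notation br := (cross3 d0 d1 d2).

Lemma cross3_linearl c u v w : br (c *: u + v) w = c *: br u w + br v w.
Proof. row3_ring. Qed.
Lemma cross3_linearr c u v w : br w (c *: u + v) = c *: br w u + br w v.
Proof. row3_ring. Qed.
Lemma cross3_alt u : br u u = 0.
Proof. row3_ring. Qed.
Lemma cross3_jacobi u v w : br u (br v w) + br v (br w u) + br w (br u v) = 0.
Proof. row3_ring. Qed.

Lemma cross3_ad0_sq u : br (row3 1 0 0) (br (row3 1 0 0) u) =
  row3 0 (- (d1 * d2) * coord3 u 1) (- (d1 * d2) * coord3 u 2).
Proof. row3_ring. Qed.
Lemma cross3_ad1_sq u : br (row3 0 1 0) (br (row3 0 1 0) u) =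
  row3 (- (d0 * d2) * coord3 u 0) 0 (- (d0 * d2) * coord3 u 2).
Proof. row3_ring. Qed.
Lemma cross3_ad2_sq u : br (row3 0 0 1) (br (row3 0 0 1) u) =
  row3 (- (d0 * d1) * coord3 u 0) (- (d0 * d1) * coord3 u 1) 0.
Proof. row3_ring. Qed.

Lemma map_cross3 (S : comNzRingType) (f : {rmorphism R -> S}) u w :
  map_mx f (br u w) = cross3 (f d0) (f d1) (f d2) (map_mx f u) (map_mx f w).
Proof.
by apply: coord3_inj; rewrite /cross3 !(coord3_map, coord3E) !(rmorphM, rmorphB).
Qed.
End Cross3.

Section Cross3Simple.
Variables (K : fieldType) (d0 d1 d2 : K).
Hypotheses (nz0 : d0 != 0) (nz1 : d1 != 0) (nz2 : d2 != 0).
Local Notation br := (cross3 d0 d1 d2).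
Local Notation e0 := (row3 (1 : K) 0 0).
Local Notation e1 := (row3 (0 : K) 1 0).
Local Notation e2 := (row3 (0 : K) 0 1).

Variable J : 'rV[K]_3 -> Prop.
Hypotheses (JD : forall u v, J u -> J v -> J (u + v))
           (JZ : forall c u, J u -> J (c *: u))
           (JB : forall u v, J v -> J (br u v)).

Lemma cross3_ideal_unscale c v w : c != 0 -> c *: v = w -> J w -> J v.
Proof. by move=> c0 <- /(JZ c^-1); rewrite scalerA mulVf // scale1r. Qed.

Lemma cross3_ideal_axis u :
  J u -> [/\ J (coord3 u 0 *: e0), J (coord3 u 1 *: e1) & J (coord3 u 2 *: e2)].
Proof.
move=> Ju; have J_comb c a v : c != 0 -> c *: v = c *: u + br a (br a u) -> J v.
  move=> c_neq0 /cross3_ideal_unscale; apply=> //.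
  by apply: JD; [apply: JZ | do 2!apply: JB].
split; [apply: (J_comb (d1 * d2) e0) | apply: (J_comb (d0 * d2) e1)
       | apply: (J_comb (d0 * d1) e2)];
  rewrite ?mulf_neq0 // ?cross3_ad0_sq ?cross3_ad1_sq ?cross3_ad2_sq;
  by apply: coord3_inj; rewrite !coord3E; ring.
Qed.

Lemma cross3_ideal_full : J e0 -> forall v, J v.
Proof.
move=> J_e0.
have J_e1 : J e1 by move: (JB e2 J_e0); apply: cross3_ideal_unscale nz1 _; row3_ring.
have J_e2 : J e2 by move: (JB e0 J_e1); apply: cross3_ideal_unscale nz2 _; row3_ring.
move=> v; have -> : v = coord3 v 0 *: e0 + coord3 v 1 *: e1 + coord3 v 2 *: e2.
  by apply: coord3_inj; rewrite !coord3E; ring.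
by apply: JD; [apply: JD|]; apply: JZ.
Qed.

Lemma cross3_ideal_trivial_or_full : (forall u, J u -> u = 0) \/ (forall u, J u).
Proof.
have [[u Ju nz_u] | J_zero] := classic (exists2 u, J u & u != 0); last first.
  by left=> u Ju; apply/eqP/negPn/negP => nz_u; apply: J_zero; exists u.
right; apply: cross3_ideal_full; have [Ju0 Ju1 Ju2] := cross3_ideal_axis Ju.
have [u0|] := eqVneq (coord3 u 0) 0; last by move/cross3_ideal_unscale; apply.
have [u1|] := eqVneq (coord3 u 1) 0.
  have [u2|] := eqVneq (coord3 u 2) 0.
    by case/eqP: nz_u; apply: coord3_inj; rewrite coord30.
  move/cross3_ideal_unscale/(_ erefl Ju2) => J_e2.
  by move: (JB e1 J_e2); apply: cross3_ideal_unscale nz0 _; row3_ring.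
move/cross3_ideal_unscale/(_ erefl Ju1) => J_e1.
move: (JB e1 (JB e0 J_e1)).
by apply: cross3_ideal_unscale (mulf_neq0 nz0 nz2) _; row3_ring.
Qed.

End Cross3Simple.

Lemma cross3_simple (K : fieldType) (d0 d1 d2 : K) :
  d0 != 0 -> d1 != 0 -> d2 != 0 -> simple_lie (cross3 d0 d1 d2).
Proof.
move=> nz0 nz1 nz2; split.
- by split; [exact: cross3_linearl | exact: cross3_linearr
            | exact: cross3_alt | exact: cross3_jacobi].
- exists (row3 0 1 0), (row3 0 0 1); apply/eqP => /(congr1 (fun v => coord3 v 0)).
  by rewrite /cross3 !coord3E mulr1 mulr0 subr0 mulr1; apply/eqP.
by move=> J _; apply: cross3_ideal_trivial_or_full.
Qed.

Section Det2.
Variables (F : fieldType) (a0 b0 : F).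
Hypothesis nz : (a0 != 0) || (b0 != 0).

Lemma det2_eq0_colinear a b :
  b0 * a - a0 * b = 0 -> exists c, a = c * a0 /\ b = c * b0.
Proof.
move/eqP; rewrite subr_eq0 => /eqP det0.
have [a0_0 | a0_neq0] := eqVneq a0 0.
  have b0_neq0 : b0 != 0 by move: nz; rewrite a0_0 eqxx.
  exists (b / b0); split; last by field.
  by rewrite a0_0 mulr0; apply: (mulfI b0_neq0); rewrite det0 a0_0 mul0r mulr0.
exists (a / a0); split; first by field.
by apply: (mulfI a0_neq0); rewrite -det0; field.
Qed.

Lemma det2_surj c : exists a b, b0 * a - a0 * b = c.
Proof.
have [b0_0 | b0_neq0] := eqVneq b0 0.
  have a0_neq0 : a0 != 0 by move: nz; rewrite b0_0 eqxx orbF.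
  by rewrite b0_0; exists 0, (- (c / a0)); field.
by exists (c / b0), 0; field.
Qed.

End Det2.

Lemma det2_neq0_span (F : fieldType) (a0 b0 a b : F) : b0 * a - a0 * b != 0 ->
  forall p q, exists c1 c2, p = c1 * a0 + c2 * a /\ q = c1 * b0 + c2 * b.
Proof.
move=> det_neq0 p q; exists ((b * p - a * q) / (a0 * b - b0 * a)).
exists ((a0 * q - b0 * p) / (a0 * b - b0 * a)).
have det'_neq0 : a0 * b - b0 * a != 0 by rewrite -opprB oppr_eq0.
by split; field.
Qed.

Lemma prime_pred_irreducible (F : fieldType) (P : {poly F} -> Prop) :
    (forall p q, P (p * q) -> P p \/ P q) -> (forall c, P c%:P -> c = 0) ->
  forall s, s != 0 -> P s -> exists2 pi, irreducible_poly pi & P pi.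
Proof.
move=> P_mul P_const s; have [n] := ubnP (size s); elim: n s => // n IH s.
rewrite ltnS => size_s s_neq0 Ps.
have [irr_s | red_s] := classic (irreducible_poly s); first by exists s.
have s_gt1 : (1 < size s)%N.
  rewrite ltnNge; apply/negP => /size1_polyC s_const.
  by move: s_neq0 Ps; rewrite s_const polyC_eq0 => /eqP c_neq0 /P_const.
have [q [q_neq1 q_dvd q_neqp]] :
    exists q : {poly F}, [/\ size q != 1%N, q %| s & ~~ (q %= s)].
  apply: NNPP => no_q; apply: red_s; split=> // q q_neq1 q_dvd.
  by apply/negPn/negP => q_neqp; apply: no_q; exists q.
have q_neq0 : q != 0 by apply: contraNneq s_neq0 => q0; rewrite -(dvd0p s) -q0.
have [r s_eq] : exists r, s = r * q by exists (s %/ q); rewrite divpK.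
have r_neq0 : r != 0 by apply: contraNneq s_neq0 => r0; rewrite s_eq r0 mul0r.
have size_q : (size q < size s)%N.
  by rewrite ltn_neqAle dvdp_size_eqp // q_neqp dvdp_leq.
have size_r : (size r < size s)%N.
  rewrite s_eq size_mul //; move: q_neq1 q_neq0; rewrite -size_poly_gt0.
  by set a := size q; set b := size r; lia.
have [Pr | Pq] := P_mul _ _ (eq_ind _ P Ps _ s_eq).
- by apply: (IH r) => //; lia.
- by apply: (IH q) => //; lia.
Qed.

Lemma ons_bracketE (k : fieldType) (u w : Ons k) :
  ons_bracket u w = cross3 (-1) 'X (- ('X - 1)) u w.
Proof.
have -> : ons_bracket u w =
    row3 (- (coord3 u 1 * coord3 w 2 - coord3 u 2 * coord3 w 1))
         ((coord3 u 2 * coord3 w 0 - coord3 u 0 * coord3 w 2) * 'X)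
         (- ((coord3 u 0 * coord3 w 1 - coord3 u 1 * coord3 w 0) * ('X - 1))) by [].
row3_ring.
Qed.

Ltac ons_ring := rewrite ?ons_bracketE; row3_ring.

Section OnsBracket.
Variable k : fieldType.
Implicit Types (p : {poly k}) (u v w : Ons k).

Lemma ons_bracketZl p u w : ons_bracket (p *: u) w = p *: ons_bracket u w.
Proof. ons_ring. Qed.
Lemma ons_bracketZr p u w : ons_bracket u (p *: w) = p *: ons_bracket u w.
Proof. ons_ring. Qed.
Lemma ons_bracketDr u v w : ons_bracket u (v + w) = ons_bracket u v + ons_bracket u w.
Proof. ons_ring. Qed.
Lemma ons_bracket0r u : ons_bracket u 0 = 0.
Proof. ons_ring. Qed.
Lemma ons_bracketC u w : ons_bracket u w = - ons_bracket w u.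
Proof. ons_ring. Qed.
Lemma ons_bracket_jacobi u v w :
  ons_bracket u (ons_bracket v w) =
  ons_bracket v (ons_bracket u w) + ons_bracket (ons_bracket u v) w.
Proof. ons_ring. Qed.

End OnsBracket.

Section OnsIdeal.
Variables (k : fieldType) (I : Ons k -> Prop).
Hypothesis I_ideal : ons_ideal I.

Lemma ideal0 : I 0.
Proof. by case: I_ideal. Qed.
Lemma idealD x y : I x -> I y -> I (x + y).
Proof. by case: I_ideal => _ + _ _; apply. Qed.
Lemma idealZ (a : k) x : I x -> I (a%:P *: x).
Proof. by case: I_ideal => _ _ + _; apply. Qed.
Lemma idealBr x y : I y -> I (ons_bracket x y).
Proof. by case: I_ideal => _ _ _; apply. Qed.
Lemma idealN x : I x -> I (- x).
Proof. by move/(idealZ (-1)); rewrite polyCN scaleNr scale1r. Qed.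

End OnsIdeal.

(* The derived algebra [O, O] is the common kernel of these two functionals. *)
Definition ons_alpha (k : fieldType) (x : Ons k) : k := (coord3 x 1).[0].
Definition ons_beta (k : fieldType) (x : Ons k) : k := (coord3 x 2).[1].

Section AlphaBeta.
Variable k : fieldType.
Implicit Types x y : Ons k.

Lemma ons_alphaD x y : ons_alpha (x + y) = ons_alpha x + ons_alpha y.
Proof. by rewrite /ons_alpha coord3D hornerD. Qed.
Lemma ons_betaD x y : ons_beta (x + y) = ons_beta x + ons_beta y.
Proof. by rewrite /ons_beta coord3D hornerD. Qed.
Lemma ons_alphaB x y : ons_alpha (x - y) = ons_alpha x - ons_alpha y.
Proof. by rewrite /ons_alpha coord3B hornerD hornerN. Qed.
Lemma ons_betaB x y : ons_beta (x - y) = ons_beta x - ons_beta y.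
Proof. by rewrite /ons_beta coord3B hornerD hornerN. Qed.
Lemma ons_alphaZ (a : k) x : ons_alpha (a%:P *: x) = a * ons_alpha x.
Proof. by rewrite /ons_alpha coord3Z hornerCM. Qed.
Lemma ons_betaZ (a : k) x : ons_beta (a%:P *: x) = a * ons_beta x.
Proof. by rewrite /ons_beta coord3Z hornerCM. Qed.
Lemma ons_alpha_row3 (p q r : {poly k}) : ons_alpha (row3 p q r) = q.[0].
Proof. by rewrite /ons_alpha coord3_row3_1. Qed.
Lemma ons_beta_row3 (p q r : {poly k}) : ons_beta (row3 p q r) = r.[1].
Proof. by rewrite /ons_beta coord3_row3_2. Qed.
Lemma ons_beta_bracket x y : ons_beta (ons_bracket x y) = 0.
Proof. by rewrite ons_bracketE /cross3 ons_beta_row3 !hornerE subrr oppr0 mul0r. Qed.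

End AlphaBeta.

Section AbelianQuotient.
Variables (k : fieldType) (I : Ons k -> Prop).
Hypotheses (I_max : ons_maximal_ideal I) (I_derived : forall x y, I (ons_bracket x y)).

Let I_ideal : ons_ideal I. Proof. by case: I_max. Qed.

Lemma ideal_ker_alpha_beta x : ons_alpha x = 0 -> ons_beta x = 0 -> I x.
Proof.
move=> alpha0 beta0.
have /factor_theorem [q1 x1E] : root (coord3 x 1) 0.
  by rewrite /root -/(ons_alpha x) alpha0.
have /factor_theorem [q2 x2E] : root (coord3 x 2) 1.
  by rewrite /root -/(ons_beta x) beta0.
have -> : x = ons_bracket (row3 0 1 0) (row3 0 0 (- coord3 x 0)) +
              ons_bracket (row3 0 0 q1) (row3 1 0 0) +
              ons_bracket (row3 (- q2) 0 0) (row3 0 1 0).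
  by rewrite !ons_bracketE; apply: coord3_inj; rewrite /cross3 !coord3E ?x1E ?x2E; ring.
by apply: (idealD I_ideal); [apply: (idealD I_ideal)|]; apply: I_derived.
Qed.

Lemma ideal_alpha_beta_comb x y1 y2 c1 c2 : I y1 -> I y2 ->
  ons_alpha x = c1 * ons_alpha y1 + c2 * ons_alpha y2 ->
  ons_beta x = c1 * ons_beta y1 + c2 * ons_beta y2 -> I x.
Proof.
move=> Iy1 Iy2 alphaE betaE.
set y := c1%:P *: y1 + c2%:P *: y2; rewrite -(subrK y x).
apply: (idealD I_ideal) => //; last by apply: (idealD I_ideal); apply: (idealZ I_ideal).
apply: ideal_ker_alpha_beta.
- by rewrite ons_alphaB ons_alphaD !ons_alphaZ alphaE subrr.
- by rewrite ons_betaB ons_betaD !ons_betaZ betaE subrr.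
Qed.

Lemma ideal_alpha_beta_neq0 : exists2 y, I y & (ons_alpha y != 0) || (ons_beta y != 0).
Proof.
apply: NNPP => no_y; have [_ _ I_maximal] := I_max.
have beta0 y : I y -> ons_beta y = 0.
  move=> Iy; apply/eqP; apply: contra_notT no_y => nz; exists y => //; by rewrite nz orbT.
have ker_beta_ideal : ons_ideal (fun x : Ons k => ons_beta x = 0).
  split=> [|x y bx b_y|a x bx|x y _].
  - by rewrite /ons_beta coord30 horner0.
  - by rewrite ons_betaD bx b_y addr0.
  - by rewrite /ons_scale ons_betaZ bx mulr0.
  - exact: ons_beta_bracket.
have [ker_sub|ker_full] := I_maximal _ ker_beta_ideal beta0.
- have /ker_sub Ie1 : ons_beta (row3 (0 : {poly k}) 1 0) = 0 by rewrite ons_beta_row3 horner0.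
  apply: no_y; exists (row3 0 1 0) => //.
  by rewrite ons_alpha_row3 hornerC oner_eq0.
- by move: (ker_full (row3 0 0 1)); rewrite ons_beta_row3 hornerC => /eqP; rewrite oner_eq0.
Qed.

Lemma abelian_quotient_dim1 : quotient_dim1 I.
Proof.
have [y Iy nz] := ideal_alpha_beta_neq0.
exists (fun x => ons_beta y * ons_alpha x - ons_alpha y * ons_beta x); split.
- by move=> u v; rewrite ons_alphaD ons_betaD; ring.
- by move=> a u; rewrite /ons_scale ons_alphaZ ons_betaZ; ring.
- move=> c; have [a [b <-]] := det2_surj nz c.
  by exists (row3 0 a%:P b%:P); rewrite ons_alpha_row3 ons_beta_row3 !hornerC.
move=> x; split=> [/(det2_eq0_colinear nz) [c [alphaE betaE]] | Ix].
  by apply: (ideal_alpha_beta_comb (c1 := c) (c2 := 0) Iy Iy); rewrite mul0r addr0.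
apply/eqP/negPn/negP => det_neq0.
have [_ [x0 Ix0] _] := I_max; apply: Ix0.
have [c1 [c2 [alphaE betaE]]] := det2_neq0_span det_neq0 (ons_alpha x0) (ons_beta x0).
exact: ideal_alpha_beta_comb Iy Ix alphaE betaE.
Qed.

End AbelianQuotient.

Definition ons_ann (k : fieldType) (I : Ons k -> Prop) (p : {poly k}) : Prop :=
  forall y, I (p *: y).

Lemma ideal_of_ann_dvd_coord3 (k : fieldType) (I : Ons k -> Prop) p (x : Ons k) :
  ons_ann I p ->
  p %| coord3 x 0 -> p %| coord3 x 1 -> p %| coord3 x 2 -> I x.
Proof.
move=> ann_p /divpK x0E /divpK x1E /divpK x2E.
have -> : x = p *: row3 (coord3 x 0 %/ p) (coord3 x 1 %/ p) (coord3 x 2 %/ p).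
  by apply: coord3_inj; rewrite !coord3E mulrC ?x0E ?x1E ?x2E.
exact: ann_p.
Qed.

Section MaximalIdeal.
Variables (k : fieldType) (I : Ons k -> Prop).
Hypothesis I_max : ons_maximal_ideal I.

Let I_ideal : ons_ideal I. Proof. by case: I_max. Qed.

Lemma maximal_ideal_sub J : ons_ideal J -> (forall x, I x -> J x) ->
  ~ (forall x, J x) -> forall x, J x -> I x.
Proof. by have [_ _ I_maximal] := I_max; move=> /I_maximal/[apply] -[]. Qed.

Lemma maximal_ideal_neq0 : exists2 x, I x & x != 0.
Proof.
apply: NNPP => I_zero.
have I0 x : I x -> x = 0.
  by move=> Ix; apply/eqP/negPn/negP => x_neq0; apply: I_zero; exists x.
pose J (x : Ons k) := exists y : Ons k, x = 'X *: y.
have J_ideal : ons_ideal J.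
  split=> [|_ _ [y ->] [y' ->]|a _ [y ->]|u _ [y ->]].
  - by exists 0; rewrite scaler0.
  - by exists (y + y'); rewrite scalerDr.
  - by exists (a%:P *: y); rewrite /ons_scale !scalerA mulrC.
  - by exists (ons_bracket u y); rewrite ons_bracketZr.
have e0_notin_J : ~ J (row3 1 0 0).
  case=> y /(congr1 (fun v => (coord3 v 0).[0])).
  by rewrite coord3Z coord3_row3_0 hornerM hornerX mul0r hornerC => /eqP; rewrite oner_eq0.
have I_sub_J x : I x -> J x by move/I0 ->; exists 0; rewrite scaler0.
have J_sub_I := maximal_ideal_sub J_ideal I_sub_J (fun J_full => e0_notin_J (J_full _)).
have /J_sub_I/I0/(congr1 (fun v => coord3 v 0)) : J ('X *: row3 1 0 0) by exists (row3 1 0 0).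
by rewrite coord3Z coord3_row3_0 coord30 mulr1 => /eqP; rewrite polyX_eq0.
Qed.

Lemma maximal_not_ann_const c : c != 0 -> ~ ons_ann I c%:P.
Proof.
have [_ [x Ix] _] := I_max; move=> c_neq0 /(_ x) /(idealZ I_ideal c^-1).
by rewrite scalerA -polyCM mulVf // scale1r.
Qed.

End MaximalIdeal.

Section NonAbelianQuotient.
Variables (k : fieldType) (I : Ons k -> Prop).
Hypotheses (I_max : ons_maximal_ideal I) (I_nonab : exists x y, ~ I (ons_bracket x y)).

Let I_ideal : ons_ideal I. Proof. by case: I_max. Qed.

Lemma ideal_of_centralizer w : (forall u, I (ons_bracket u w)) -> I w.
Proof.
have C_ideal : ons_ideal (fun w => forall u, I (ons_bracket u w)).
  split=> [u|y z Iy Iz u|c z Iz u|y z Iz u].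
  - by rewrite ons_bracket0r; apply: ideal0.
  - by rewrite ons_bracketDr; apply: idealD.
  - by rewrite /ons_scale ons_bracketZr; apply: idealZ.
  - by rewrite ons_bracket_jacobi; apply: idealD => //; apply: idealBr.
apply: (maximal_ideal_sub I_max C_ideal) => [x Ix u|C_full]; first exact: idealBr.
by have [x [y]] := I_nonab; apply; apply: C_full.
Qed.

Lemma ideal_polyZ p x : I x -> I (p *: x).
Proof.
move=> Ix; apply: ideal_of_centralizer => u.
by rewrite ons_bracketZr -ons_bracketZl; apply: idealBr.
Qed.

Lemma ideal_of_centralizer2 w : (forall u v, I (ons_bracket (ons_bracket u v) w)) -> I w.
Proof.
have C_ideal : ons_ideal (fun w => forall u v, I (ons_bracket (ons_bracket u v) w)).
  split=> [u v|y z Iy Iz u v|c z Iz u v|y z Iz u v].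
  - by rewrite ons_bracket0r; apply: ideal0.
  - by rewrite ons_bracketDr; apply: idealD.
  - by rewrite /ons_scale ons_bracketZr; apply: idealZ.
  - by rewrite ons_bracket_jacobi; apply: idealD => //; apply: idealBr.
apply: (maximal_ideal_sub I_max C_ideal) => [x Ix u v|C_full]; first exact: idealBr.
have [x [y]] := I_nonab; apply; apply: ideal_of_centralizer => u.
by rewrite ons_bracketC; apply: idealN => //; apply: C_full.
Qed.

Lemma ideal_polyZ_cancel q x : ~ ons_ann I q -> I (q *: x) -> I x.
Proof.
move=> not_ann; have Q_ideal : ons_ideal (fun x => I (q *: x)).
  split=> [|y z Iy Iz|c z Iz|y z Iz].
  - by rewrite scaler0; apply: ideal0.
  - by rewrite scalerDr; apply: idealD.
  - by rewrite /ons_scale scalerA mulrC -scalerA; apply: idealZ.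
  - by rewrite -ons_bracketZr; apply: idealBr.
exact: (maximal_ideal_sub I_max Q_ideal (ideal_polyZ q) not_ann).
Qed.

Lemma ons_ann_mul p q : ons_ann I (p * q) -> ons_ann I p \/ ons_ann I q.
Proof.
move=> ann_pq; have [ann_q|not_ann_q] := classic (ons_ann I q); first by right.
by left=> y; apply: (ideal_polyZ_cancel not_ann_q); rewrite scalerA mulrC.
Qed.

Lemma ons_ann_dvd p q : p %| q -> ons_ann I p -> ons_ann I q.
Proof. by move=> /divpK <- ann_p y; rewrite -scalerA; apply/ideal_polyZ/ann_p. Qed.

Lemma ons_ann_row3 s :
  I (row3 s 0 0) -> I (row3 0 s 0) -> I (row3 0 0 s) -> ons_ann I s.
Proof.
move=> I0 I1 I2 y.
have -> : s *: y = coord3 y 0 *: row3 s 0 0 + coord3 y 1 *: row3 0 s 0 +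
                   coord3 y 2 *: row3 0 0 s.
  by apply: coord3_inj; rewrite !coord3E; ring.
by apply: (idealD I_ideal); [apply: (idealD I_ideal)|]; apply: ideal_polyZ.
Qed.

Local Notation q := ('X * ('X - 1) : {poly k}).

Let q_neq0 : q != 0.
Proof. by rewrite mulf_neq0 ?polyX_eq0 // -polyC1 polyXsubC_eq0. Qed.
Local Notation e0 := (row3 (1 : {poly k}) 0 0).
Local Notation e1 := (row3 (0 : {poly k}) 1 0).
Local Notation e2 := (row3 (0 : {poly k}) 0 1).

Lemma ideal_axis x : I x -> [/\ I (row3 (q ^+ 2 * coord3 x 0) 0 0),
  I (row3 0 (q ^+ 2 * coord3 x 1) 0) & I (row3 0 0 (q ^+ 2 * coord3 x 2))].
Proof.
move=> Ix; have I_ad4 p a b y :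
    p *: ons_bracket a (ons_bracket a (ons_bracket b (ons_bracket b x))) = y -> I y.
  by move=> <-; apply: ideal_polyZ; do 4!apply: idealBr => //.
split; [apply: (I_ad4 (- q) e2 e1) | apply: (I_ad4 ('X - 1) e2 e0)
       | apply: (I_ad4 (- 'X) e1 e0)];
  rewrite !ons_bracketE ?cross3_ad0_sq ?cross3_ad1_sq ?cross3_ad2_sq;
  by apply: coord3_inj; rewrite !coord3E; ring.
Qed.

Lemma ons_ann_axis a :
  [\/ I (row3 a 0 0), I (row3 0 a 0) | I (row3 0 0 a)] -> ons_ann I (q * a).
Proof.
have I_ad p u v : I v -> I (p *: ons_bracket u v).
  by move=> Iv; apply: ideal_polyZ; apply: idealBr.
case=> Ia; apply: ons_ann_row3.
- by rewrite (_ : row3 (q * a) 0 0 = q *: row3 a 0 0);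
    [exact: ideal_polyZ | ons_ring].
- by rewrite (_ : row3 0 (q * a) 0 = ('X - 1) *: ons_bracket e2 (row3 a 0 0));
    [exact: I_ad | ons_ring].
- by rewrite (_ : row3 0 0 (q * a) = 'X *: ons_bracket e1 (row3 a 0 0));
    [exact: I_ad | ons_ring].
- by rewrite (_ : row3 (q * a) 0 0 = q *: ons_bracket e2 (row3 0 a 0));
    [exact: I_ad | ons_ring].
- by rewrite (_ : row3 0 (q * a) 0 = q *: row3 0 a 0);
    [exact: ideal_polyZ | ons_ring].
- by rewrite (_ : row3 0 0 (q * a) = - 'X *: ons_bracket e0 (row3 0 a 0));
    [exact: I_ad | ons_ring].
- by rewrite (_ : row3 (q * a) 0 0 = - q *: ons_bracket e1 (row3 0 0 a));
    [exact: I_ad | ons_ring].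
- by rewrite (_ : row3 0 (q * a) 0 = - ('X - 1) *: ons_bracket e0 (row3 0 0 a));
    [exact: I_ad | ons_ring].
- by rewrite (_ : row3 0 0 (q * a) = q *: row3 0 0 a);
    [exact: ideal_polyZ | ons_ring].
Qed.

Lemma ons_ann_neq0 : exists2 s, s != 0 & ons_ann I s.
Proof.
have [x Ix x_neq0] := maximal_ideal_neq0 I_max.
have q2_neq0 : q ^+ 2 != 0 by rewrite expf_neq0.
suff [a a_neq0 Ia] : exists2 a, a != 0 &
    [\/ I (row3 a 0 0), I (row3 0 a 0) | I (row3 0 0 a)].
  by exists (q * a); [rewrite mulf_neq0 | exact: ons_ann_axis].
have [I0 I1 I2] := ideal_axis Ix.
have [x0|] := eqVneq (coord3 x 0) 0; last first.
  by exists (q ^+ 2 * coord3 x 0); [exact: mulf_neq0 | constructor 1].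
have [x1|] := eqVneq (coord3 x 1) 0; last first.
  by exists (q ^+ 2 * coord3 x 1); [exact: mulf_neq0 | constructor 2].
have [x2|] := eqVneq (coord3 x 2) 0; last first.
  by exists (q ^+ 2 * coord3 x 2); [exact: mulf_neq0 | constructor 3].
by case/eqP: x_neq0; apply: coord3_inj; rewrite coord30.
Qed.

Lemma ons_ann_irreducible : exists2 pi, irreducible_poly pi & ons_ann I pi.
Proof.
have [s s_neq0 ann_s] := ons_ann_neq0.
apply: (prime_pred_irreducible ons_ann_mul _ s_neq0 ann_s) => c ann_c.
by apply/eqP/negPn/negP => c_neq0; exact: (maximal_not_ann_const I_max c_neq0 ann_c).
Qed.

(* If t O <= I, then [[O, O], v0] and [[O, O], v2] lie in t O <= I, hence v0, v2 lie in I,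
   and so does every bracket; similarly for t - 1 with v0, v1. *)
Lemma not_ons_ann_X : ~ ons_ann I 'X.
Proof.
move=> ann_X.
have I_e0 : I e0.
  apply: ideal_of_centralizer2 => u v.
  have -> : ons_bracket (ons_bracket u v) e0 = 'X *: row3 0
      (- (coord3 u 0 * coord3 v 1 - coord3 u 1 * coord3 v 0) * ('X - 1))
      (('X - 1) * (coord3 u 2 * coord3 v 0 - coord3 u 0 * coord3 v 2)) by ons_ring.
  exact: ann_X.
have I_e2 : I e2.
  apply: ideal_of_centralizer2 => u v.
  have -> : ons_bracket (ons_bracket u v) e2 = 'X *: row3
      (- (coord3 u 2 * coord3 v 0 - coord3 u 0 * coord3 v 2))
      (coord3 u 1 * coord3 v 2 - coord3 u 2 * coord3 v 1) 0 by ons_ring.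
  exact: ann_X.
have [x [y]] := I_nonab; apply.
have -> : ons_bracket x y = coord3 (ons_bracket x y) 0 *: e0 +
    coord3 (ons_bracket x y) 2 *: e2 +
    'X *: row3 0 (coord3 x 2 * coord3 y 0 - coord3 x 0 * coord3 y 2) 0 by ons_ring.
by apply: (idealD I_ideal) => //; apply: (idealD I_ideal); apply: ideal_polyZ.
Qed.

Lemma not_ons_ann_X1 : ~ ons_ann I ('X - 1).
Proof.
move=> ann_X1.
have I_e0 : I e0.
  apply: ideal_of_centralizer2 => u v.
  have -> : ons_bracket (ons_bracket u v) e0 = ('X - 1) *: row3 0
      (- (coord3 u 0 * coord3 v 1 - coord3 u 1 * coord3 v 0) * 'X)
      ('X * (coord3 u 2 * coord3 v 0 - coord3 u 0 * coord3 v 2)) by ons_ring.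
  exact: ann_X1.
have I_e1 : I e1.
  apply: ideal_of_centralizer2 => u v.
  have -> : ons_bracket (ons_bracket u v) e1 = ('X - 1) *: row3
      (- (coord3 u 0 * coord3 v 1 - coord3 u 1 * coord3 v 0))
      0 (coord3 u 1 * coord3 v 2 - coord3 u 2 * coord3 v 1) by ons_ring.
  exact: ann_X1.
have [x [y]] := I_nonab; apply.
have -> : ons_bracket x y = coord3 (ons_bracket x y) 0 *: e0 +
    coord3 (ons_bracket x y) 1 *: e1 +
    ('X - 1) *: row3 0 0 (- (coord3 x 0 * coord3 y 1 - coord3 x 1 * coord3 y 0)) by ons_ring.
by apply: (idealD I_ideal) => //; apply: (idealD I_ideal); apply: ideal_polyZ.
Qed.

End NonAbelianQuotient.

(* With K = k[t]/(pi) and z the class of t, [ons_eval] is reduction modulo pi. *)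
Section Evaluation.
Variables (k : fieldType) (pi : {poly k}) (K : fieldExtType k) (z : K).
Hypotheses (pi_irr : irreducible_poly pi) (pi_z : root (map_poly (in_alg K) pi) z)
           (z_gen : <<1; z>>%VS = fullv).

Lemma dvdp_of_horner_alg_eq0 q : horner_alg z q = 0 -> pi %| q.
Proof.
move=> qz0; apply/negPn/negP => not_dvd.
have cop : coprimep (map_poly (in_alg K) pi) (map_poly (in_alg K) q).
  by rewrite coprimep_map irreducible_poly_coprime //; apply/negP.
have : horner_alg z q != 0 := coprimep_root cop pi_z.
by rewrite qz0 eqxx.
Qed.

Lemma horner_alg_surj c : exists q, horner_alg z q = c.
Proof.
have : c \in <<1; z>>%VS by rewrite z_gen memvf.
by case/Fadjoin_polyP => p /polyOver1P [q ->] ->; exists q.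
Qed.

Definition ons_eval (x : Ons k) : 'rV[K]_3 := map_mx (horner_alg z) x.

Lemma ons_evalZ q x : ons_eval (q *: x) = horner_alg z q *: ons_eval x.
Proof. exact: map_mxZ. Qed.

Lemma ons_eval_bracket x y :
  ons_eval (ons_bracket x y) = cross3 (-1) z (- (z - 1)) (ons_eval x) (ons_eval y).
Proof.
rewrite ons_bracketE /ons_eval map_cross3 /= !rmorphN rmorphB rmorph1 horner_algX.
by congr (cross3 _ _ (- (_ - _))); exact: horner_algX.
Qed.

Lemma ons_eval_surj v : exists x, ons_eval x = v.
Proof.
have [q0 q0E] := horner_alg_surj (coord3 v 0).
have [q1 q1E] := horner_alg_surj (coord3 v 1).
have [q2 q2E] := horner_alg_surj (coord3 v 2).
by exists (row3 q0 q1 q2); apply: coord3_inj; rewrite !coord3_map !coord3E.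
Qed.

Lemma ons_eval_eq0_dvdp x i : ons_eval x = 0 -> pi %| coord3 x i.
Proof.
by move=> x0; apply: dvdp_of_horner_alg_eq0; rewrite -coord3_map -/(ons_eval x) x0 coord30.
Qed.

End Evaluation.

Section NonAbelianEvaluation.
Variables (k : fieldType) (I : Ons k -> Prop) (pi : {poly k}) (K : fieldExtType k) (z : K).
Hypotheses (I_max : ons_maximal_ideal I) (I_nonab : exists x y, ~ I (ons_bracket x y)).
Hypotheses (pi_irr : irreducible_poly pi) (pi_z : root (map_poly (in_alg K) pi) z)
           (z_gen : <<1; z>>%VS = fullv) (ann_pi : ons_ann I pi).

Let I_ideal : ons_ideal I. Proof. by case: I_max. Qed.

Lemma ons_ann_of_horner_alg_eq0 q : horner_alg z q = 0 -> ons_ann I q.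
Proof.
by move/(dvdp_of_horner_alg_eq0 pi_irr pi_z)/(ons_ann_dvd I_max I_nonab); apply.
Qed.

Lemma cross3_eval_simple : simple_lie (cross3 (-1) z (- (z - 1))).
Proof.
apply: cross3_simple; first by rewrite oppr_eq0 oner_eq0.
  apply/eqP => z0; apply: (not_ons_ann_X I_max I_nonab).
  by apply: ons_ann_of_horner_alg_eq0; rewrite horner_algX.
rewrite oppr_eq0 subr_eq0; apply/eqP => z1; apply: (not_ons_ann_X1 I_max I_nonab).
by apply: ons_ann_of_horner_alg_eq0; rewrite rmorphB rmorph1 /= horner_algX z1 subrr.
Qed.

Lemma ker_ons_eval x : ons_eval z x = 0 <-> I x.
Proof.
have eval_sub x' : ons_eval z x' = 0 -> I x'.
  by move=> x0; apply: (ideal_of_ann_dvd_coord3 ann_pi);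
    apply: (ons_eval_eq0_dvdp pi_irr pi_z).
split=> [|Ix]; first exact: eval_sub.
pose J v := exists2 y, I y & ons_eval z y = v.
have [_ _ J_triv] := cross3_eval_simple.
have [J0|J_full] : (forall v, J v -> v = 0) \/ (forall v, J v).
  apply: J_triv.
  - by exists 0; [exact: ideal0 | exact: map_mx0].
  - by move=> _ _ [y Iy <-] [y' Iy' <-]; exists (y + y'); [exact: idealD | exact: map_mxD].
  - move=> c _ [y Iy <-]; have [q <-] := horner_alg_surj z_gen c.
    by exists (q *: y); [exact: ideal_polyZ | exact: ons_evalZ].
  - move=> u _ [y Iy <-]; have [x' <-] := ons_eval_surj z_gen u.
    by exists (ons_bracket x' y); [exact: idealBr | exact: ons_eval_bracket].
  by apply: J0; exists x.
have [_ [w Iw] _] := I_max; case: Iw.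
have [y Iy yw] := J_full (ons_eval z w).
rewrite -(subrK y w); apply: idealD => //; apply: eval_sub.
by rewrite /ons_eval map_mxB -!/(ons_eval z _) yw subrr.
Qed.

End NonAbelianEvaluation.

Lemma nonabelian_quotient_simple3 (k : fieldType) (I : Ons k -> Prop) :
  ons_maximal_ideal I -> (exists x y, ~ I (ons_bracket x y)) ->
  exists K : fieldExtType k, quotient_simple3_over K I.
Proof.
move=> I_max I_nonab; have [pi pi_irr ann_pi] := ons_ann_irreducible I_max I_nonab.
have [K _ [z pi_z z_gen]] := irredp_FAdjoin pi_irr.
exists K, (ons_eval z), (cross3 (-1) z (- (z - 1))); split.
- exact: map_mxD.
- by move=> a x; rewrite /ons_scale ons_evalZ horner_algC.
- split; first exact: ons_eval_surj.
  exact: (ker_ons_eval I_max I_nonab pi_irr pi_z z_gen ann_pi).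
- exact: ons_eval_bracket.
- exact: (cross3_eval_simple I_max I_nonab pi_irr pi_z ann_pi).
Qed.

Theorem corollary4p7 (k : fieldType) (hk : ~~ (2%N \in [pchar k])%R)
  (I : Ons k -> Prop) (hI : ons_maximal_ideal I) :
  quotient_dim1 I \/ exists K : fieldExtType k, quotient_simple3_over K I.
Proof.
have [I_nonab|I_derived] := classic (exists x y, ~ I (ons_bracket x y)).
  by right; apply: nonabelian_quotient_simple3.
left; apply: abelian_quotient_dim1 => // x y.
by apply: NNPP => xy_notin; apply: I_derived; exists x, y.
Qed.
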